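(* Let $D\geq 2$ and $2\leq r\leq D^2$. Then the set of primitive completely positive maps on $\mathcal{M}_D(\mathbb{C})$ of Kraus rank $r$ is non-empty.
   Context: A CP map on $\mathcal{M}_D(\mathbb{C})$ has the form $\mathcal{T}(X)=\sum_iA_iXA_i^\dagger$; its Kraus rank is the minimal number of such $A_i$, equal to the rank of the Choi matrix $\omega(\mathcal{T})=(\mathcal{T}\otimes\mathrm{id})(|\varphi\rangle\langle\varphi|)$, $\varphi=\sum_i|ii\rangle$ (so it is at most $D^2$). $\mathcal{T}$ is primitive iff there exists $n\in\mathbb{N}$ with $\mathrm{rank}\,\omega(\mathcal{T}^n)=D^2$. *)

From HB Require Import structures.
From mathcomp Require Import all_boot all_order all_algebra.
From mathcomp.real_closed Require Import mxtens.
Set Implicit Arguments. Unset Strict Implicit. Unset Printing Implicit Defensive.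
Import Order.TTheory GRing.Theory Num.Theory.
Local Open Scope ring_scope.

(* The field C of scalars is an arbitrary numClosedFieldType (e.g. the complex
   numbers); Num.conj is complex conjugation. *)

Definition adjmx (C : numClosedFieldType) (D : nat) (A : 'M[C]_D) : 'M[C]_D :=
  map_mx Num.conj A^T.

Definition kraus_map (C : numClosedFieldType) (D k : nat) (A : 'I_k -> 'M[C]_D)
  (X : 'M[C]_D) : 'M[C]_D :=
  \sum_(i < k) (A i *m X *m adjmx (A i)).

(* Choi matrix  omega(T) = (T (x) id)(|phi><phi|) = \sum_{i,j} T(E_ij) (x) E_ij,
   with phi = \sum_i |ii>. *)
Definition choi (C : numClosedFieldType) (D : nat) (T : 'M[C]_D -> 'M[C]_D)
  : 'M[C]_(D * D) :=
  \sum_(i < D) \sum_(j < D) (T (delta_mx i j) *t (delta_mx i j : 'M[C]_D)).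

Definition kraus_rank (C : numClosedFieldType) (D : nat) (T : 'M[C]_D -> 'M[C]_D)
  : nat := \rank (choi T).

Definition primitive (C : numClosedFieldType) (D : nat) (T : 'M[C]_D -> 'M[C]_D)
  : Prop := exists n : nat, \rank (choi (iter n T)) = (D ^ 2)%N.

From mathcomp Require Import all_boot all_order all_algebra.
From mathcomp.real_closed Require Import mxtens.
From mathcomp Require Import zify.
Set Implicit Arguments. Unset Strict Implicit. Unset Printing Implicit Defensive.
Import Order.TTheory GRing.Theory Num.Theory.
Local Open Scope ring_scope.

(* Take as Kraus operators the cyclic shift P, the matrix unit E00 and r - 2
   further matrix units. The Choi matrix is the Gram matrix of the flattened
   Kraus operators, so its rank is the dimension of their span; these r
   operators are linearly independent, hence the Kraus rank is r. The Kraus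
   operators of T^n are all products of n of them, and P^i E00^(t+1) P^(-j) = E_ij,
   so for n = 2D every matrix unit occurs and the Choi matrix of T^n has full rank. *)

Section Gram.
Variable C : numClosedFieldType.

Lemma row_dot_conj_eq0 (k : nat) (y : 'rV[C]_k) :
  y *m (map_mx Num.conj y)^T = 0 -> y = 0.
Proof.
move=> /matrixP /(_ 0 0); rewrite !mxE => y_norm0.
have sq_ge0 j : true -> 0 <= y 0 j * (y 0 j)^* by rewrite -normCK exprn_ge0.
apply/rowP => j; rewrite mxE.
have /(psumr_eq0P sq_ge0)/(_ j isT) : \sum_j y 0 j * (y 0 j)^* = 0.
  by rewrite -[RHS]y_norm0; apply: eq_bigr => i _; rewrite !mxE.
by rewrite -normCK => /eqP; rewrite expf_eq0 /= normr_eq0 => /eqP.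
Qed.

Lemma mxrank_gram (k n : nat) (M : 'M[C]_(k, n)) :
  \rank (M^T *m map_mx Num.conj M) = \rank M.
Proof.
apply/eqP; rewrite eqn_leq; apply/andP; split.
  by rewrite (leq_trans (mxrankM_maxr _ _)) // (mxrank_map Num.Def.conjC).
have ker_sub : (kermx (M^T *m map_mx Num.conj M) <= kermx M^T)%MS.
  apply/row_subP => i; apply/sub_kermxP; apply: row_dot_conj_eq0.
  rewrite map_mxM trmx_mul map_trmx trmxK !mulmxA -[_ *m M^T *m _]mulmxA.
  by have /sub_kermxP -> := row_sub i (kermx (M^T *m map_mx Num.conj M)); rewrite mul0mx.
have := mxrankS ker_sub; rewrite !mxrank_ker mxrank_tr.
have := rank_leq_col M; have := rank_leq_row M.
have := rank_leq_col (M^T *m map_mx Num.conj M).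
lia.
Qed.

End Gram.

Section KrausChoi.
Variables (C : numClosedFieldType) (D : nat).

Definition kraus_map_fin (I : finType) (F : I -> 'M[C]_D) (X : 'M[C]_D) : 'M[C]_D :=
  \sum_(i : I) (F i *m X *m adjmx (F i)).

Definition kraus_mx (I : finType) (F : I -> 'M[C]_D) : 'M[C]_(#|I|, D * D) :=
  \matrix_(l, x) F (enum_val l) (mxtens_unindex x).1 (mxtens_unindex x).2.

Lemma adjmxM (A B : 'M[C]_D) : adjmx (A *m B) = adjmx B *m adjmx A.
Proof. by rewrite /adjmx trmx_mul map_mxM. Qed.

Lemma mulmx_delta_mxE (A B : 'M[C]_D) i j p q :
  (A *m delta_mx i j *m B) p q = A p i * B j q.
Proof.
rewrite mxE (bigD1 j) //= big1 ?addr0 => [|b /negbTE b_j]; last first.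
  by rewrite mxE big1 ?mul0r // => a _; rewrite mxE b_j andbF mulr0.
rewrite mxE (bigD1 i) //= big1 ?addr0 => [|a /negbTE a_i]; last first.
  by rewrite mxE a_i mulr0.
by rewrite mxE !eqxx mulr1.
Qed.

Lemma choiE (T : 'M[C]_D -> 'M[C]_D) p i q j :
  choi T (mxtens_index (p, i)) (mxtens_index (q, j)) = T (delta_mx i j) p q.
Proof.
have tensE a b : (T (delta_mx a b) *t delta_mx a b)
    (mxtens_index (p, i)) (mxtens_index (q, j)) = T (delta_mx a b) p q * ((i == a) && (j == b))%:R.
  by rewrite tensmxE mxE.
rewrite /choi summxE (bigD1 i) //= [X in _ + X]big1 => [|a a_i]; last first.
  by rewrite summxE big1 // => b _; rewrite tensE eq_sym (negbTE a_i) mulr0.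
rewrite addr0 summxE (bigD1 j) //= [X in _ + X]big1 => [|b b_j]; last first.
  by rewrite tensE [j == b]eq_sym (negbTE b_j) andbF mulr0.
by rewrite addr0 tensE !eqxx mulr1.
Qed.

Lemma choi_kraus_map_fin (I : finType) (F : I -> 'M[C]_D) :
  choi (kraus_map_fin F) = (kraus_mx F)^T *m map_mx Num.conj (kraus_mx F).
Proof.
apply/matrixP => x y.
case: (mxtens_indexP x) => p i; case: (mxtens_indexP y) => q j.
rewrite choiE mxE summxE (reindex _ (onW_bij _ (@enum_val_bij I))).
by apply: eq_bigr => l _; rewrite mulmx_delta_mxE /adjmx !mxE !mxtens_indexK.
Qed.

Lemma rank_choi_kraus_map_fin (I : finType) (F : I -> 'M[C]_D) :
  \rank (choi (kraus_map_fin F)) = \rank (kraus_mx F).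
Proof. by rewrite choi_kraus_map_fin mxrank_gram. Qed.

Lemma kraus_rank_kraus_map (k : nat) (A : 'I_k -> 'M[C]_D) :
  kraus_rank (kraus_map A) = \rank (kraus_mx A).
Proof. exact: rank_choi_kraus_map_fin. Qed.

Lemma rank_kraus_mx_free (I : finType) (F : I -> 'M[C]_D) :
  (forall v : I -> C, \sum_i v i *: F i = 0 -> forall i, v i = 0) ->
  \rank (kraus_mx F) = #|I|.
Proof.
move=> F_free; apply/eqP/inj_row_free => u uF0.
apply/rowP => l; rewrite mxE -[l]enum_valK; apply: (F_free (fun i => u 0 (enum_rank i))).
apply/matrixP => a b; rewrite summxE mxE (reindex _ (onW_bij _ (@enum_val_bij I))).
have /rowP /(_ (mxtens_index (a, b))) := uF0.
rewrite !mxE => uab; rewrite -[RHS]uab; apply: eq_bigr => k _.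
by rewrite enum_valK !mxE mxtens_indexK.
Qed.

Lemma rank_kraus_mx_units (I : finType) (F : I -> 'M[C]_D) :
  (forall i j, exists l, F l = delta_mx i j) -> \rank (kraus_mx F) = (D * D)%N.
Proof.
move=> F_units; apply/eqP; rewrite -[_ == _]/(row_full _) -sub1mx; apply/row_subP => x.
case: (mxtens_indexP x) => i j; have [l Fl] := F_units i j.
apply: (eq_row_sub (enum_rank l)); apply/rowP => y; rewrite !mxE enum_rankK Fl.
case: (mxtens_indexP y) => p q; rewrite mxtens_indexK !mxE (can_eq (@mxtens_indexK _ _)).
by rewrite xpair_eqE /= [p == i]eq_sym [q == j]eq_sym.
Qed.

Lemma kraus_map_fin_comp (I J : finType) (F : I -> 'M[C]_D) (G : J -> 'M[C]_D) X :
  kraus_map_fin F (kraus_map_fin G X) =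
  kraus_map_fin (fun ij : I * J => F ij.1 *m G ij.2) X.
Proof.
rewrite /kraus_map_fin.
rewrite -(pair_bigA _ (fun i j => F i *m G j *m X *m adjmx (F i *m G j))).
apply: eq_bigr => i _.
rewrite mulmx_sumr mulmx_suml; apply: eq_bigr => j _.
by rewrite adjmxM !mulmxA.
Qed.

Lemma eq_choi (T1 T2 : 'M[C]_D -> 'M[C]_D) : T1 =1 T2 -> choi T1 = choi T2.
Proof. by move=> eqT; apply: eq_bigr => i _; apply: eq_bigr => j _; rewrite eqT. Qed.

Definition word_mx (k : nat) (A : 'I_k -> 'M[C]_D) (w : seq 'I_k) : 'M[C]_D :=
  foldr (fun a M => A a *m M) 1%:M w.

Lemma word_mx_cat (k : nat) (A : 'I_k -> 'M[C]_D) (w1 w2 : seq 'I_k) :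
  word_mx A (w1 ++ w2) = word_mx A w1 *m word_mx A w2.
Proof. by elim: w1 => [|a w1 IHw] /=; rewrite ?mul1mx // IHw mulmxA. Qed.

Lemma iter_kraus_map_words (k : nat) (A : 'I_k -> 'M[C]_D) (n : nat) :
  exists (I : finType) (G : I -> 'M[C]_D),
    (forall X, iter n (kraus_map A) X = kraus_map_fin G X) /\
    forall w, size w = n -> exists i, G i = word_mx A w.
Proof.
elim: n => [|n [I [G [iterE G_words]]]].
  exists 'I_1, (fun=> 1%:M); split=> [X|[|//] _]; last by exists ord0.
  by rewrite /kraus_map_fin big_ord1 /adjmx trmx1 map_mx1 mul1mx mulmx1.
exists ('I_k * I)%type, (fun ai => A ai.1 *m G ai.2); split.
  by move=> X; rewrite iterS iterE -kraus_map_fin_comp.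
case=> [//|a w [/G_words [i Gi]]]; exists (a, i).
by rewrite /= Gi.
Qed.

Lemma primitive_of_unit_words (k : nat) (A : 'I_k -> 'M[C]_D) (n : nat) :
  (forall i j, exists2 w, size w = n & word_mx A w = delta_mx i j) ->
  primitive (kraus_map A).
Proof.
move=> unit_words; have [I [G [iterE G_words]]] := iter_kraus_map_words A n.
exists n; rewrite (eq_choi iterE) rank_choi_kraus_map_fin -mulnn.
apply: rank_kraus_mx_units => i j.
have [w size_w <-] := unit_words i j.
exact: G_words.
Qed.

End KrausChoi.

Section ShiftWords.
Variables (C : numClosedFieldType) (m : nat).
Local Notation D := m.+2.

Definition shift_mx : 'M[C]_D := \matrix_(x, y) (x == y + 1)%:R.

Lemma shift_mx_delta (i j : 'I_D) : shift_mx * delta_mx i j = delta_mx (i + 1) j.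
Proof.
apply/matrixP => x y; rewrite mxE (bigD1 i) //= big1 ?addr0 => [|z /negbTE z_i].
  by rewrite !mxE !eqxx -natrM mulnb.
by rewrite !mxE z_i mulr0.
Qed.

Lemma delta_shift_mx (i j : 'I_D) : delta_mx i j * shift_mx = delta_mx i (j - 1).
Proof.
apply/matrixP => x y; rewrite mxE (bigD1 j) //= big1 ?addr0 => [|z /negbTE z_j].
  by rewrite !mxE !eqxx andbT -natrM mulnb [y == _]eq_sym subr_eq.
by rewrite !mxE z_j andbF mul0r.
Qed.

Lemma word_mx_nseq (k : nat) (A : 'I_k -> 'M[C]_D) n a :
  word_mx A (nseq n a) = A a ^+ n.
Proof. by elim: n => //= n; rewrite /word_mx => /= ->; rewrite exprS mulmxE. Qed.

Lemma shift_unit_shift (i j : 'I_D) t :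
  shift_mx ^+ i * delta_mx 0 0 ^+ t.+1 * shift_mx ^+ (- j)%R = delta_mx i j.
Proof.
have E00_pow u : delta_mx 0 0 ^+ u.+1 = delta_mx 0 0 :> 'M[C]_D.
  by elim: u => // u IHu; rewrite exprS IHu -mulmxE mul_delta_mx.
have shift_pow_delta (a : nat) (x y : 'I_D) :
    shift_mx ^+ a * delta_mx x y = delta_mx (x + a%:R) y.
  elim: a x => [|a IHa] x; first by rewrite mul1r addr0.
  by rewrite exprSr -mulrA shift_mx_delta IHa -addrA -natr1 [1 + _]addrC.
have delta_shift_pow (c : nat) (x y : 'I_D) :
    delta_mx x y * shift_mx ^+ c = delta_mx x (y - c%:R).
  elim: c y => [|c IHc] y; first by rewrite mulr1 subr0.
  by rewrite exprS mulrA delta_shift_mx IHc -addrA -opprD -natr1 [1 + _]addrC.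
by rewrite E00_pow shift_pow_delta delta_shift_pow add0r sub0r !natr_Zp opprK.
Qed.

(* E_ij is the word P^i E00^(t+1) P^(-j), padded by t to length 2D; here -j is taken in 'I_D. *)
Lemma primitive_shift_unit (k : nat) (A : 'I_k -> 'M[C]_D) e0 e1 :
  A e0 = shift_mx -> A e1 = delta_mx 0 0 -> primitive (kraus_map A).
Proof.
move=> Ae0 Ae1; apply: (@primitive_of_unit_words _ _ _ _ (2 * D)) => i j.
have i_lt := ltn_ord i; have mj_lt := ltn_ord (- j).
exists (nseq i e0 ++ nseq (2 * D - i - (- j)%R - 1).+1 e1 ++ nseq (- j)%R e0).
  by rewrite !size_cat !size_nseq; lia.
by rewrite !word_mx_cat !word_mx_nseq Ae0 Ae1 !mulmxE mulrA shift_unit_shift.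
Qed.

End ShiftWords.

Section Family.
Variables (C : numClosedFieldType) (m s : nat).
Local Notation D := m.+2.
Hypothesis s_le : (s <= D * D - 2)%N.

(* E00 occupies (0,0), and (1,0) is left free so that the coefficient of the
   shift can be read off there. *)
Definition free_positions : {set 'I_D * 'I_D} := ~: [set (0, 0); (1, 0)].

Definition free_position (j : nat) : 'I_D * 'I_D := nth (0, 0) (enum free_positions) j.

Lemma card_free_positions : #|free_positions| = (D * D - 2)%N.
Proof.
rewrite cardsCs setCK cards2 card_prod card_ord xpair_eqE negb_and eq_sym.
by rewrite oner_neq0.
Qed.

Lemma free_position_in (j : 'I_s) : free_position j \in free_positions.
Proof.
rewrite -mem_enum mem_nth // -cardE card_free_positions.
exact: leq_trans (ltn_ord j) s_le.
Qed.

Lemma free_position_inj (i j : 'I_s) : (free_position i == free_position j) = (i == j).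
Proof.
have lt_size (l : 'I_s) : (l < size (enum free_positions))%N.
  by rewrite -cardE card_free_positions (leq_trans (ltn_ord l) s_le).
by rewrite nth_uniq ?enum_uniq.
Qed.

Definition unit_family (i : 'I_s.+2) : 'M[C]_D :=
  match unlift ord0 i with
  | None => shift_mx C m
  | Some i' => match unlift ord0 i' with
               | None => delta_mx 0 0
               | Some j => delta_mx (free_position j).1 (free_position j).2
               end
  end.

Lemma unit_family_free (v : 'I_s.+2 -> C) :
  \sum_i v i *: unit_family i = 0 -> forall i, v i = 0.
Proof.
move=> /matrixP v_sum0.
have sumE a b : (\sum_i v i *: unit_family i) a b =
    v ord0 * (a == b + 1)%:R + v (lift ord0 ord0) * ((a == 0) && (b == 0))%:R +
    \sum_(j < s) v (lift ord0 (lift ord0 j)) * (free_position j == (a, b))%:R.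
  rewrite summxE !big_ord_recl /unit_family unlift_none liftK unlift_none.
  rewrite !mxE addrA; congr (_ + _); apply: eq_bigr => j _; rewrite !liftK !mxE.
  by case: (free_position j) => x y; rewrite xpair_eqE [x == a]eq_sym [y == b]eq_sym.
have free_sum0 p : p \notin free_positions ->
    \sum_(j < s) v (lift ord0 (lift ord0 j)) * (free_position j == p)%:R = 0.
  move=> p_fixed; rewrite big1 // => j _; case: eqP => [pj_p|]; last by rewrite mulr0.
  by have := free_position_in j; rewrite pj_p (negbTE p_fixed).
have v0 : v ord0 = 0.
  have := v_sum0 1 0; rewrite sumE free_sum0 ?mxE; last by rewrite !inE eqxx orbT.
  by rewrite add0r eqxx oner_eq0 mulr1 mulr0 !addr0.
have v1 : v (lift ord0 ord0) = 0.
  have := v_sum0 0 0; rewrite sumE free_sum0 ?mxE; last by rewrite !inE eqxx.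
  by rewrite v0 mul0r add0r eqxx mulr1 addr0.
have v2 j : v (lift ord0 (lift ord0 j)) = 0.
  have := v_sum0 (free_position j).1 (free_position j).2.
  rewrite sumE v0 v1 !mul0r !add0r mxE (bigD1 j) //= -surjective_pairing eqxx mulr1.
  rewrite big1 ?addr0 // => l l_j.
  by rewrite free_position_inj (negbTE l_j) mulr0.
by move=> i; case: (unliftP ord0 i) => [i' ->|->] //; case: (unliftP ord0 i') => [j ->|->].
Qed.

End Family.

Theorem lemma3 (C : numClosedFieldType) (D r : nat) :
  (2 <= D)%N -> (2 <= r <= D ^ 2)%N ->
  exists (k : nat) (A : 'I_k -> 'M[C]_D),
    kraus_rank (kraus_map A) = r /\ primitive (kraus_map A).
Proof.
move=> D_ge2 /andP [r_ge2 r_le].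
case: D D_ge2 r_le => [|[|m]] // _ r_le.
case: r r_ge2 r_le => [|[|s]] // _ r_le.
have s_le : (s <= m.+2 * m.+2 - 2)%N by rewrite mulnn; lia.
exists s.+2, (@unit_family C m s); split.
  by rewrite kraus_rank_kraus_map (rank_kraus_mx_free (unit_family_free s_le)) card_ord.
apply: (primitive_shift_unit (e0 := ord0) (e1 := lift ord0 ord0)).
  by rewrite /unit_family unlift_none.
by rewrite /unit_family liftK unlift_none.
Qed.
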